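(* Let $n\ge2$, $l\in\{1,\dots,n-1\}$, $p$ a strictly positive distribution on $\{0,1\}^n$, and let the Fisher information matrix of the $l$-mixed coordinates at $p$ be $G_\zeta=\begin{pmatrix}A&0\\0&B\end{pmatrix}$ with $A=((G_\eta^{-1})_{I_\eta})^{-1}$ and $B=((G_\theta^{-1})_{J_\theta})^{-1}$. Then the diagonal elements of $A$ are lower bounded by one, and the diagonal elements of $B$ are upper bounded by one.
   Context: $X_I(x)=\prod_{i\in I}x_i$; $\eta_I=E_p[X_I]$; $\theta^I$ defined by $\log p(x)=\sum_{I\ne\emptyset}\theta^IX_I(x)-\psi(\theta)$. $I_\eta=\{I:1\le|I|\le l\}$, $J_\theta=\{I:|I|>l\}$; the $l$-mixed coordinates are $((\eta_I)_{I\in I_\eta},(\theta^I)_{I\in J_\theta})$. $G_\eta,G_\theta$ are the Fisher information matrices of the $\eta$- and $\theta$-coordinates at $p$ (so $G_\theta$ has entries $\eta_{I\cup J}-\eta_I\eta_J$), and $M_{\mathcal I}$ denotes the principal submatrix of $M$ indexed by $\mathcal I$. *)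

From HB Require Import structures.
From mathcomp Require Import all_boot all_order all_algebra.
Unset Printing Implicit Defensive.
Import Order.TTheory GRing.Theory Num.Theory.
Local Open Scope ring_scope.

Section Defs.
Variables (R : realFieldType) (n : nat).

Definition state := {ffun 'I_n -> bool}.

Definition Xmon (I : {set 'I_n}) (x : state) : R :=
  \prod_(i in I) (nat_of_bool (x i))%:R.

Definition eta (p : state -> R) (I : {set 'I_n}) : R :=
  \sum_(x : state) p x * Xmon I x.

Definition NE : {set {set 'I_n}} := [set I : {set 'I_n} | I != set0].

Definition N := #|NE|.

Definition idx (k : 'I_N) : {set 'I_n} := @enum_val _ (mem NE) k.

(* Fisher information of theta-coordinates: entries eta_{I u J} - eta_I eta_J *)
Definition Gtheta (p : state -> R) : 'M[R]_N :=
  \matrix_(i, j) (eta p (idx i :|: idx j) - eta p (idx i) * eta p (idx j)).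

Definition Geta (p : state -> R) : 'M[R]_N := invmx (Gtheta p).

Definition Ieta (l : nat) : {set 'I_N} := [set k : 'I_N | #|idx k| <= l]%N.
Definition Jtheta (l : nat) : {set 'I_N} := [set k : 'I_N | l < #|idx k|]%N.

Definition principal (M : 'M[R]_N) (S : {set 'I_N}) : 'M[R]_#|S| :=
  mxsub (@enum_val _ (mem S)) (@enum_val _ (mem S)) M.

Definition Amat (p : state -> R) (l : nat) : 'M[R]_#|Ieta l| :=
  invmx (principal (invmx (Geta p)) (Ieta l)).
Definition Bmat (p : state -> R) (l : nat) : 'M[R]_#|Jtheta l| :=
  invmx (principal (invmx (Gtheta p)) (Jtheta l)).

End Defs.

From Pilot Require Import Defs.
From HB Require Import structures.
From mathcomp Require Import all_boot all_order all_algebra.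
From mathcomp Require Import ring lra.
Import Order.TTheory GRing.Theory Num.Theory.
Local Open Scope ring_scope.
Set Implicit Arguments.
Unset Strict Implicit.

(* G_theta is the covariance matrix of the statistics X_I, I nonempty, under
   p; these are affinely independent, so G_theta is positive definite, and its
   diagonal entries eta_I - eta_I^2 are at most 1.  For a positive definite
   symmetric M, the inequality 2 <u, v>_M <= <u, u>_M + <v, v>_M with
   u = e_i and v = e_i M^-1 gives (M^-1)_ii >= 2 - M_ii, which handles A.
   For B, with P the selection matrix of J_theta, the same inequality for
   u = e_j B P G^-1 and v = e_j P shows that the inverse of a principal
   submatrix of G^-1 (a Schur complement of G) has diagonal entries bounded by
   those of G. *)

Section PositiveDefinite.
Variable R : realFieldType.

Definition form m (M : 'M[R]_m) (u v : 'rV[R]_m) : R := (u *m M *m v^T) 0 0.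

Definition posdef m (M : 'M[R]_m) := forall u, u != 0 -> 0 < form M u u.

Lemma form_mulmx m k (M : 'M[R]_m) (A B : 'M[R]_(k, m)) u v :
  form M (u *m A) (v *m B) = form (A *m M *m B^T) u v.
Proof. by rewrite /form trmx_mul !mulmxA. Qed.

Lemma form_delta m (M : 'M[R]_m) i :
  form M (delta_mx 0 i) (delta_mx 0 i) = M i i.
Proof. by rewrite /form trmx_delta -rowE -colE !mxE. Qed.

Lemma formC m (M : 'M[R]_m) u v : M^T = M -> form M v u = form M u v.
Proof.
move=> symM; rewrite /form.
have -> : v *m M *m u^T = (u *m M *m v^T)^T.
  by rewrite !trmx_mul trmxK symM mulmxA.
by rewrite mxE.
Qed.

Lemma formBl m (M : 'M[R]_m) u v w : form M (u - v) w = form M u w - form M v w.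
Proof. by rewrite /form !mulmxBl [LHS]mxE [X in _ + X]mxE. Qed.

Lemma formBr m (M : 'M[R]_m) u v w : form M w (u - v) = form M w u - form M w v.
Proof. by rewrite /form linearB /= mulmxBr [LHS]mxE [X in _ + X]mxE. Qed.

Lemma posdef_form_ge0 m (M : 'M[R]_m) u : posdef M -> 0 <= form M u u.
Proof.
move=> pdM; have [->|nz] := eqVneq u 0; last exact/ltW/pdM.
by rewrite /form !mul0mx mxE.
Qed.

Lemma posdef_formD m (M : 'M[R]_m) u v : M^T = M -> posdef M ->
  2 * form M u v <= form M u u + form M v v.
Proof.
move=> symM pdM; have := posdef_form_ge0 (u - v) pdM.
by rewrite formBl !formBr (formC _ _ symM); lra.
Qed.

Lemma posdef_unitmx m (M : 'M[R]_m) : posdef M -> M \in unitmx.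
Proof.
move=> pdM; rewrite unitmxE unitfE; apply/negP => /det0P [v nz vM0].
by have := pdM v nz; rewrite /form vM0 mul0mx mxE ltxx.
Qed.

Lemma posdef_invmx m (M : 'M[R]_m) : M^T = M -> posdef M -> posdef (invmx M).
Proof.
move=> symM pdM u nz; have uM := posdef_unitmx pdM.
have -> : form (invmx M) u u = form M (u *m invmx M) (u *m invmx M).
  by rewrite form_mulmx trmx_inv symM mulVmx // mul1mx.
apply: pdM; apply: contra nz => /eqP uM0.
by rewrite -(mulmxKV uM u) uM0 mul0mx.
Qed.

Lemma invmx_diag_ge m (M : 'M[R]_m) i : M^T = M -> posdef M ->
  2 - M i i <= invmx M i i.
Proof.
move=> symM pdM; have uM := posdef_unitmx pdM.
set e : 'rV[R]_m := delta_mx 0 i.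
have := posdef_formD e (e *m invmx M) symM pdM.
have -> : form M e (e *m invmx M) = 1.
  rewrite -[X in form M X]mulmx1 form_mulmx mul1mx trmx_inv symM mulmxV //.
  by rewrite form_delta mxE eqxx.
have -> : form M (e *m invmx M) (e *m invmx M) = invmx M i i.
  by rewrite form_mulmx trmx_inv symM mulVmx // mul1mx form_delta.
rewrite form_delta; lra.
Qed.

Section Selection.
Variables (m k : nat) (g : 'I_k -> 'I_m).
Hypothesis g_inj : injective g.

Let P : 'M[R]_(k, m) := rowsub g 1%:M.

Lemma mxsub_selection (M : 'M[R]_m) : mxsub g g M = P *m M *m P^T.
Proof.
rewrite /P mul_rowsub_mx mul1mx trmx_mxsub trmx1 mulmx_colsub mulmx1.
by rewrite -mxsub_comp.
Qed.

Lemma selection_mulmx_tr : P *m P^T = 1%:M.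
Proof.
have := mxsub_selection 1%:M; rewrite mulmx1 => <-.
by apply/matrixP => a b; rewrite !mxE (inj_eq g_inj).
Qed.

Lemma posdef_mxsub (M : 'M[R]_m) : posdef M -> posdef (mxsub g g M).
Proof.
move=> pdM u nz; rewrite mxsub_selection -form_mulmx.
apply: pdM; apply: contra nz => /eqP uP0.
by rewrite -(mulmx1 u) -selection_mulmx_tr mulmxA uP0 mul0mx.
Qed.

Lemma invmx_mxsub_invmx_diag_le (S : 'M[R]_m) j : S^T = S -> posdef S ->
  invmx (mxsub g g (invmx S)) j j <= S (g j) (g j).
Proof.
move=> symS pdS; have uS := posdef_unitmx pdS.
set Si := invmx S; have symSi : Si^T = Si by rewrite trmx_inv symS.
set K := mxsub g g Si.
have uK : K \in unitmx by apply/posdef_unitmx/posdef_mxsub/posdef_invmx.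
set B := invmx K; have symB : B^T = B.
  by rewrite trmx_inv trmx_mxsub symSi.
set e : 'rV[R]_k := delta_mx 0 j.
have := posdef_formD (e *m (B *m P *m Si)) (e *m P) symS pdS.
rewrite !form_mulmx.
have -> : B *m P *m Si *m S *m (B *m P *m Si)^T = B.
  rewrite !trmx_mul symSi symB -(mulmxA _ Si S) mulVmx // mulmx1.
  have -> : B *m P *m (Si *m (P^T *m B)) = B *m K *m B.
    by rewrite /K mxsub_selection !mulmxA.
  by rewrite mulVmx // mul1mx.
rewrite -(mulmxA _ Si S) mulVmx // mulmx1.
rewrite -(mulmxA _ P) selection_mulmx_tr mulmx1 -mxsub_selection.
rewrite !form_delta mxE; lra.
Qed.

End Selection.

End PositiveDefinite.

Section ThetaFisher.
Variables (R : realFieldType) (n : nat) (p : state n -> R).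

Local Notation X := (Xmon R n).
Local Notation E := (Defs.eta R n p).
Local Notation G := (Gtheta R n p).

Lemma Xmon_subset I x : X I x = (I \subset [set i | x i])%:R.
Proof.
rewrite /Xmon; have [sub|/subsetPn [i Ii]] := boolP (I \subset _).
  by rewrite big1 // => i /(subsetP sub); rewrite inE => ->.
by rewrite inE => /negbTE xi0; rewrite (bigD1 i) //= xi0 mul0r.
Qed.

Lemma XmonU I J x : X (I :|: J) x = X I x * X J x.
Proof. by rewrite !Xmon_subset subUset -natrM mulnb. Qed.

Lemma idx_neq0 a : idx n a != set0.
Proof. by have := enum_valP a; rewrite inE. Qed.

Lemma Xmon_indicator (I J : {set 'I_n}) :
  X I [ffun i => i \in J] = (I \subset J)%:R.
Proof.
rewrite Xmon_subset; suff -> : [set i | [ffun i => i \in J] i] = J by [].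
by apply/setP => i; rewrite inE ffunE.
Qed.

(* Evaluating at the indicator of idx a kills, by induction on #|idx a|, every
   other coefficient; the indicator of the empty set shows that c = 0. *)
Lemma Xmon_free (u : 'rV[R]_(N n)) c :
  (forall x, \sum_a u 0 a * X (idx n a) x = c) -> u = 0.
Proof.
move=> uX.
have c0 : c = 0.
  rewrite -(uX [ffun i => i \in set0]) big1 // => a _.
  by rewrite Xmon_indicator subset0 (negbTE (idx_neq0 a)) mulr0.
suff ua0 k a : (#|idx n a| < k)%N -> u 0 a = 0.
  by apply/rowP => a; rewrite mxE (ua0 _ a (ltnSn _)).
elim: k a => [//|k IHk] a lt_a.
have := uX [ffun i => i \in idx n a]; rewrite c0 (bigD1 a) //= big1 ?addr0.
  by rewrite Xmon_indicator subxx mulr1.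
move=> b ba; rewrite Xmon_indicator.
have [sub|] := boolP (idx n b \subset idx n a); last by rewrite mulr0.
rewrite IHk ?mul0r // (leq_trans _ (ltnSE lt_a)) // proper_card //.
rewrite properEneq sub andbT.
by apply: contra ba => /eqP/enum_val_inj ->.
Qed.

Lemma Gtheta_tr : G^T = G.
Proof. by apply/matrixP => a b; rewrite !mxE setUC mulrC. Qed.

Lemma Gtheta_diag_le1 a : G a a <= 1.
Proof. by rewrite mxE setUid; nra. Qed.

Definition centered (x : state n) (a : 'I_(N n)) : R :=
  X (idx n a) x - E (idx n a).

Hypothesis p_sum1 : \sum_x p x = 1.

Lemma Gtheta_cov a b : G a b = \sum_x p x * (centered x a * centered x b).
Proof.
have expand x : p x * (centered x a * centered x b) =
    p x * X (idx n a :|: idx n b) x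
    - (E (idx n b) * (p x * X (idx n a) x)
       + E (idx n a) * (p x * X (idx n b) x))
    + E (idx n a) * E (idx n b) * p x.
  by rewrite XmonU /centered; ring.
rewrite mxE (eq_bigr _ (fun x _ => expand x)) big_split /= sumrB big_split /=.
by rewrite -!mulr_sumr p_sum1 /Defs.eta; ring.
Qed.

Lemma Gtheta_form u :
  form G u u = \sum_x p x * (\sum_a u 0 a * centered x a) ^+ 2.
Proof.
rewrite /form mxE.
under eq_bigr => b _ do rewrite mxE [u^T _ _]mxE big_distrl /=.
under eq_bigr => b _ do under eq_bigr => a _ do
  rewrite Gtheta_cov big_distrr big_distrl /=.
under eq_bigr => b _ do rewrite exchange_big /=.
rewrite exchange_big /=.
under [RHS]eq_bigr => x _ do rewrite expr2 big_distrl big_distrr /=.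
apply: eq_bigr => x _; apply: eq_bigr => a _.
rewrite !big_distrr /=; apply: eq_bigr => b _; ring.
Qed.

Lemma centered_free (u : 'rV[R]_(N n)) :
  (forall x, \sum_a u 0 a * centered x a = 0) -> u = 0.
Proof.
move=> u_centered; apply: (@Xmon_free u (\sum_a u 0 a * E (idx n a))) => x.
have := u_centered x; under eq_bigr do rewrite mulrBr.
by rewrite sumrB => /eqP; rewrite subr_eq0 => /eqP.
Qed.

Hypothesis p_pos : forall x, 0 < p x.

Lemma Gtheta_posdef : posdef G.
Proof.
move=> u nz; rewrite Gtheta_form lt_def sumr_ge0 ?andbT; last first.
  by move=> x _; rewrite mulr_ge0 ?sqr_ge0 ?ltW.
apply: contra nz => /eqP/psumr_eq0P sum0; apply/eqP/centered_free => x.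
have /eqP := sum0 (fun y _ => mulr_ge0 (ltW (p_pos y)) (sqr_ge0 _)) x isT.
by rewrite mulf_eq0 (gt_eqF (p_pos x)) sqrf_eq0 => /eqP.
Qed.

End ThetaFisher.

Theorem lemma1 (R : realFieldType) (n l : nat) (p : state n -> R) :
  (2 <= n)%N -> (1 <= l)%N -> (l <= n - 1)%N ->
  (forall x, 0 < p x) -> \sum_(x : state n) p x = 1 ->
  (forall i : 'I_#|Ieta n l|, 1 <= Amat R n p l i i) /\
  (forall j : 'I_#|Jtheta n l|, Bmat R n p l j j <= 1).
Proof.
move=> _ _ _ p_pos p_sum1.
have pdG := Gtheta_posdef p_sum1 p_pos.
split=> [i|j].
  rewrite /Amat /Geta invmxK /principal.
  set M := mxsub _ _ (Gtheta R n p).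
  have symM : M^T = M by rewrite trmx_mxsub Gtheta_tr.
  have pdM : posdef M by apply/posdef_mxsub/pdG/enum_val_inj.
  have := invmx_diag_ge i symM pdM.
  have : M i i <= 1 by rewrite mxE Gtheta_diag_le1.
  lra.
rewrite /Bmat /principal.
apply: le_trans (invmx_mxsub_invmx_diag_le _ j (Gtheta_tr p) pdG) _.
  exact: enum_val_inj.
exact: Gtheta_diag_le1.
Qed.
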